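(* The radial part $\widetilde L$ of the sub-Laplacian $L$ on ${\rm AdS}^{15}(\mathbb{O})$ is given, in the coordinates $(r,\eta)$ with $r=\tanh^{-1}\rho$, by \[ \widetilde{L}=\frac{\partial^2}{\partial r^2}+(7\coth r+7\tanh r)\frac{\partial}{\partial r}+\tanh^2 r\left(\frac{\partial^2}{\partial \eta^2}+6\cot \eta\,\frac{\partial}{\partial \eta}\right). \] Here $r=\tanh^{-1}\rho$ is the Riemannian distance in $\mathbb{O}H^1$ from the origin $w=0$ to $w$.
   Context: Let $\mathbb{O}$ be the octonions, with real basis $e_0,\dots,e_7$ and norm $\|x\|^2=\sum_j x_j^2$ for $x=\sum_j x_je_j$. The multiplication is given by $e_0e_j=e_j$, $e_ie_0=e_i$, and for $i,j\ge1$, $e_ie_j=-\delta_{ij}e_0+\epsilon_{ijk}e_k$, where $\epsilon_{ijk}$ is totally antisymmetric and equals $1$ for $ijk=123,145,176,246,257,347,365$. The octonionic anti-de Sitter space is ${\rm AdS}^{15}(\mathbb{O})=\{(x,y)\in\mathbb{O}^2:\ \|x\|^2-\|y\|^2=-1\}$. It carries the pseudo-Riemannian metric of signature $(8,7)$ induced from $\mathbb{R}^{8,8}\cong\mathbb{O}^2$ with metric ${\rm d}x_0^2+\dots+{\rm d}x_7^2-{\rm d}y_0^2-\dots-{\rm d}y_7^2$. The octonionic hyperbolic space $\mathbb{O}H^1$ is identified with the open unit ball of $\mathbb{O}$, equipped with its octonionic hyperbolic metric. The map $\pi(x,y)=y^{-1}x$ is a pseudo-Riemannian submersion ${\rm AdS}^{15}(\mathbb{O})\to\mathbb{O}H^1$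 with totally geodesic fibers isometric to the round sphere $\mathbb{S}^7$ (the octonionic anti-de Sitter fibration). The sub-Laplacian $L$ is the horizontal lift to ${\rm AdS}^{15}(\mathbb{O})$ of the Laplace–Beltrami operator of $\mathbb{O}H^1$. Equivalently, $L=\square_{{\rm AdS}^{15}(\mathbb{O})}+\Delta_{\mathcal V}$, where $\square$ is the Laplace–Beltrami operator (d'Alembertian) of the pseudo-Riemannian metric and $\Delta_{\mathcal V}$ is the vertical Laplacian, identified with the Laplacian $\Delta_{\mathbb{S}^7}$ of the fiber. Cylindrical coordinates: let $p$ be the north pole of $\mathbb{S}^7$ (unit octonions), $Y_1,\dots,Y_7$ an orthonormal frame of $T_p\mathbb{S}^7$, and $\exp_p$ the Riemannian exponential map of $\mathbb{S}^7$ at $p$. Define \[ \psi(w,\theta)=\left(\frac{\exp_p(\sum_i\theta_iY_i)\,w}{\sqrt{1-\rho^2}},\ \frac{\exp_p(\sum_i\theta_iY_i)}{\sqrt{1-\rho^2}}\right), \] where $w\in\mathbb{O}$ with $\rho=\|w\|<1$, and $\theta\in\mathbb{R}^7$ with $\eta=\|\theta\|<\pi$. A function is radial cylindrical if, in these coordinates, it depends only on $(\rho,\eta)$. The radial part $\widetilde L$ of $L$ is the operator acting on smooth compactly supported functions $f$ of $(\rho,\eta)\in[0,1)\times[0,\pi)$ such that $L(f\circ\psi)=(\widetilde Lf)\circ\psi$. *)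

From Stdlib Require Import Reals Lra List Bool Arith ClassicalEpsilon.
Import ListNotations.
Open Scope R_scope.

Fixpoint rsum (n : nat) (f : nat -> R) : R :=
  match n with O => 0 | S m => rsum m f + f m end.

(* An octonion x = sum_j x_j e_j is represented by its coordinate function;
   only the indices 0..7 are meaningful. *)
Definition Oct := nat -> R.

Definition clean (x : Oct) : Oct := fun k => if (k <? 8)%nat then x k else 0.

Definition e0 : Oct := fun k => if Nat.eqb k 0 then 1 else 0.

Definition oscale (a : R) (x : Oct) : Oct := clean (fun k => a * x k).

Definition onorm2 (x : Oct) : R := rsum 8 (fun k => x k ^ 2).
Definition onorm (x : Oct) : R := sqrt (onorm2 x).
Definition oinner (x y : Oct) : R := rsum 8 (fun k => x k * y k).

(* the triples ijk with epsilon_{ijk} = 1 *)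
Definition eps_triples : list (nat * nat * nat) :=
  [(1,2,3); (1,4,5); (1,7,6); (2,4,6); (2,5,7); (3,4,7); (3,6,5)]%nat.

Definition eps_pos (i j k : nat) : bool :=
  existsb (fun t => match t with (a, b, c) =>
     (Nat.eqb i a && Nat.eqb j b && Nat.eqb k c)
  || (Nat.eqb i b && Nat.eqb j c && Nat.eqb k a)
  || (Nat.eqb i c && Nat.eqb j a && Nat.eqb k b) end) eps_triples.

Definition eps (i j k : nat) : R :=
  if eps_pos i j k then 1 else if eps_pos j i k then -1 else 0.

Definition kron (i j : nat) : R := if Nat.eqb i j then 1 else 0.

(* coefficient of e_k in the product e_i e_j (i,j,k in 0..7) *)
Definition mcoef (i j k : nat) : R :=
  if Nat.eqb i 0 then kron j k
  else if Nat.eqb j 0 then kron i k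
  else if Nat.eqb k 0 then - kron i j
  else eps i j k.

Definition omul (x y : Oct) : Oct :=
  clean (fun k => rsum 8 (fun i => rsum 8 (fun j => x i * y j * mcoef i j k))).

Definition oconj (x : Oct) : Oct :=
  clean (fun k => if Nat.eqb k 0 then x k else - x k).

Definition oinv (x : Oct) : Oct := oscale (/ onorm2 x) (oconj x).

(* the derivative of g at t (meaningful when g is differentiable at t) *)
Definition deriv (g : R -> R) (t : R) : R :=
  epsilon (inhabits 0) (fun l => derivable_pt_lim g t l).

Definition upd (x : Oct) (i : nat) (t : R) : Oct :=
  fun k => if Nat.eqb k i then x k + t else x k.

Definition d2 (i : nat) (H : Oct -> R) (x : Oct) : R :=
  deriv (fun t => deriv (fun s => H (upd (upd x i t) i s)) 0) 0.

Definition lapR8 (H : Oct -> R) (x : Oct) : R := rsum 8 (fun i => d2 i H x).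

(* R^{8,8} = O^2 with quadratic form |x|^2 - |y|^2 *)
Definition AdS (x y : Oct) : Prop := onorm2 x - onorm2 y = -1.

(* degree-0 homogeneous extension of a function on AdS^15(O) to a
   neighbourhood of AdS^15(O) in R^{8,8} *)
Definition homog (F : Oct -> Oct -> R) (x y : Oct) : R :=
  let s := / sqrt (onorm2 y - onorm2 x) in F (oscale s x) (oscale s y).

(* d'Alembertian (Laplace-Beltrami operator) of AdS^15(O) with the induced
   metric of signature (8,7): the flat d'Alembertian of R^{8,8}
   (sum_j d^2/dx_j^2 - sum_j d^2/dy_j^2) applied to the degree-0
   homogeneous extension, evaluated on AdS^15(O). *)
Definition dalembert (F : Oct -> Oct -> R) (x y : Oct) : R :=
  lapR8 (fun x' => homog F x' y) x - lapR8 (fun y' => homog F x y') y.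

(* Laplacian of the round sphere S^7 (unit octonions) at u, computed as the
   Euclidean Laplacian of the degree-0 homogeneous extension. *)
Definition lapS7 (h : Oct -> R) (u : Oct) : R :=
  lapR8 (fun v => h (oscale (/ onorm v) v)) u.

(* vertical Laplacian: the fiber of pi(x,y) = y^{-1} x through (x,y) is
   { (a (u w), a u) : u in S^7 }, with w = y^{-1} x, a = |y| = 1/sqrt(1-|w|^2);
   Delta_V is the Laplacian of S^7 in the fiber variable u, at u = y/|y|. *)
Definition vertlap (F : Oct -> Oct -> R) (x y : Oct) : R :=
  let w := omul (oinv y) x in
  let a := onorm y in
  lapS7 (fun u => F (oscale a (omul u w)) (oscale a u)) (oscale (/ a) y).

Definition subL (F : Oct -> Oct -> R) (x y : Oct) : R :=
  dalembert F x y + vertlap F x y.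

(* theta in R^7 is represented by its coordinates theta 1, ..., theta 7 *)
Definition thnorm (th : nat -> R) : R :=
  sqrt (rsum 7 (fun i => th (S i) ^ 2)).

Definition orthonormal_frame_at_e0 (Y : nat -> Oct) : Prop :=
  (forall i, (1 <= i <= 7)%nat -> Y i 0%nat = 0) /\
  (forall i j, (1 <= i <= 7)%nat -> (1 <= j <= 7)%nat ->
     oinner (Y i) (Y j) = kron i j).

Definition expS7 (Y : nat -> Oct) (th : nat -> R) : Oct :=
  let v : Oct := fun k => rsum 7 (fun i => th (S i) * Y (S i) k) in
  let eta := thnorm th in
  clean (fun k => cos eta * e0 k + (sin eta / eta) * v k).

Definition psi_x (Y : nat -> Oct) (w : Oct) (th : nat -> R) : Oct :=
  oscale (/ sqrt (1 - onorm2 w)) (omul (expS7 Y th) w).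
Definition psi_y (Y : nat -> Oct) (w : Oct) (th : nat -> R) : Oct :=
  oscale (/ sqrt (1 - onorm2 w)) (expS7 Y th).

Definition p1 (f : R -> R -> R) : R -> R -> R := fun a b => deriv (fun s => f s b) a.
Definition p2 (f : R -> R -> R) : R -> R -> R := fun a b => deriv (fun s => f a s) b.

Fixpoint iterp (ws : list bool) (f : R -> R -> R) : R -> R -> R :=
  match ws with nil => f | b :: ws' => (if b then p1 else p2) (iterp ws' f) end.

Definition cont2_at (g : R -> R -> R) (a b : R) : Prop :=
  forall e, 0 < e -> exists d, 0 < d /\ forall a' b',
    Rabs (a' - a) < d -> Rabs (b' - b) < d -> Rabs (g a' b' - g a b) < e.

Definition smooth_on (U : R -> R -> Prop) (f : R -> R -> R) : Prop :=
  forall ws a b, U a b ->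
    (exists l, derivable_pt_lim (fun s => iterp ws f s b) a l) /\
    (exists l, derivable_pt_lim (fun s => iterp ws f a s) b l) /\
    cont2_at (iterp ws f) a b.

From Pilot Require Import Defs.
From Stdlib Require Import Reals Lra Lia FunctionalExtensionality ClassicalEpsilon.
From Coquelicot Require Import Coquelicot.
Open Scope R_scope.

(* The map psi is onto the part of AdS^15(O) where y_0/|y| lies in (-1,1), with
   |w| = |x|/|y| and |theta| = acos (y_0/|y|): write y/|y| = exp_p(v) and w = (y/|y|)^-1 x/|y|,
   using that [e0, Y 1, ..., Y 7] is an orthonormal basis and that left multiplication by a
   unit octonion is an isometry.  Hence F = f(|x|/|y|, acos (y_0/|y|)) there, and the same
   formula describes its degree-0 extension and the fibre function in the vertical Laplacian.
   Each of the three Euclidean Laplacians making up L is therefore a Laplacian on R^8 of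
   f(g(|z|), acos (z_0/|z|)) (possibly with a constant second argument), which the chain
   rule computes from |grad g(|z|)|^2 = g'^2, Delta g(|z|) = g'' + 7 g'/|z|,
   |grad acos (z_0/|z|)|^2 = 1/|z|^2, Delta acos (z_0/|z|) = 6 cot/|z|^2 and the
   orthogonality of the two gradients.  Summing gives the operator in rho = |w|, and the
   substitution rho = tanh r gives the stated form. *)

(** * Finite sums *)

Lemma rsum_ext n f g : (forall i, (i < n)%nat -> f i = g i) -> rsum n f = rsum n g.
Proof.
  induction n as [|n IH]; intros H; simpl; [reflexivity|].
  rewrite IH by (intros; apply H; lia). rewrite H by lia. reflexivity.
Qed.

Lemma rsum_add n f g : rsum n (fun i => f i + g i) = rsum n f + rsum n g.
Proof. induction n as [|n IH]; simpl; [ring|]. rewrite IH. ring. Qed.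

Lemma rsum_scal_l n c f : rsum n (fun i => c * f i) = c * rsum n f.
Proof. induction n as [|n IH]; simpl; [ring|]. rewrite IH. ring. Qed.

Lemma rsum_scal_r n c f : rsum n (fun i => f i * c) = rsum n f * c.
Proof. induction n as [|n IH]; simpl; [ring|]. rewrite IH. ring. Qed.

Lemma rsum_const n c : rsum n (fun _ => c) = INR n * c.
Proof. induction n as [|n IH]; simpl rsum; [simpl; ring|]. rewrite IH, S_INR. ring. Qed.

Lemma rsum_zero n f : (forall i, (i < n)%nat -> f i = 0) -> rsum n f = 0.
Proof. intros H. rewrite (rsum_ext n f (fun _ => 0)), rsum_const by exact H. ring. Qed.

Lemma rsum_shift n f : rsum (S n) f = f 0%nat + rsum n (fun i => f (S i)).
Proof. induction n as [|n IH]; simpl in *; [ring|]. rewrite IH. ring. Qed.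

Lemma rsum_comm n m g :
  rsum n (fun k => rsum m (fun i => g i k)) = rsum m (fun i => rsum n (fun k => g i k)).
Proof.
  induction n as [|n IH]; simpl.
  - rewrite rsum_const. ring.
  - rewrite IH, <- rsum_add. reflexivity.
Qed.

Lemma rsum_mul n m f g :
  rsum n f * rsum m g = rsum n (fun i => rsum m (fun j => f i * g j)).
Proof. induction n as [|n IH]; simpl; [ring|]. rewrite <- IH, rsum_scal_l. ring. Qed.

Lemma rsum_kron_r n i g : (i < n)%nat -> rsum n (fun j => g j * kron i j) = g i.
Proof.
  induction n as [|n IH]; intros Hi; [lia|]. simpl. unfold kron at 2.
  destruct (Nat.eqb_spec i n) as [->|Hne].
  - rewrite (rsum_ext n _ (fun _ => 0)), rsum_const; [ring|].
    intros j Hj. unfold kron. destruct (Nat.eqb_spec n j); [lia|ring].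
  - rewrite IH by lia. ring.
Qed.

Lemma rsum_nonneg n f : (forall i, (i < n)%nat -> 0 <= f i) -> 0 <= rsum n f.
Proof.
  induction n as [|n IH]; simpl; intros H; [lra|].
  assert (0 <= rsum n f) by (apply IH; intros; apply H; lia).
  assert (0 <= f n) by (apply H; lia).
  lra.
Qed.

Lemma rsum_eq0_nonneg n f : (forall i, (i < n)%nat -> 0 <= f i) ->
  rsum n f = 0 -> forall i, (i < n)%nat -> f i = 0.
Proof.
  induction n as [|n IH]; simpl; intros H E i Hi; [lia|].
  assert (0 <= rsum n f) by (apply rsum_nonneg; intros; apply H; lia).
  assert (0 <= f n) by (apply H; lia).
  destruct (Nat.eq_dec i n) as [->|Hne]; [lra|].
  apply IH; [intros; apply H; lia | lra | lia].
Qed.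

Lemma kron_sym i j : kron i j = kron j i.
Proof. unfold kron. rewrite Nat.eqb_sym. reflexivity. Qed.

Lemma kron_sq i j : kron i j ^ 2 = kron i j.
Proof. unfold kron. destruct (Nat.eqb i j); ring. Qed.

Lemma rsum_gram_sq n (A : nat -> nat -> R) :
  rsum n (fun k => rsum n (fun l => rsum n (fun i => A i k * A i l) ^ 2)) =
  rsum n (fun i => rsum n (fun j => rsum n (fun k => A i k * A j k) ^ 2)).
Proof.
  set (X i j k l := A i k * A j k * (A i l * A j l)).
  transitivity (rsum n (fun k => rsum n (fun l => rsum n (fun i => rsum n (fun j => X i j k l))))).
  { apply rsum_ext; intros k _; apply rsum_ext; intros l _.
    rewrite <- Rsqr_pow2; unfold Rsqr. rewrite rsum_mul.
    apply rsum_ext; intros i _; apply rsum_ext; intros j _. unfold X. ring. }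
  transitivity (rsum n (fun i => rsum n (fun j => rsum n (fun k => rsum n (fun l => X i j k l))))).
  2:{ apply rsum_ext; intros i _; apply rsum_ext; intros j _.
      rewrite <- Rsqr_pow2; unfold Rsqr. rewrite rsum_mul. reflexivity. }
  transitivity (rsum n (fun k => rsum n (fun i => rsum n (fun j => rsum n (fun l => X i j k l))))).
  { apply rsum_ext; intros k _.
    rewrite (rsum_comm n n (fun i l => rsum n (fun j => X i j k l))).
    apply rsum_ext; intros i _. apply (rsum_comm n n (fun j l => X i j k l)). }
  rewrite (rsum_comm n n (fun i k => rsum n (fun j => rsum n (fun l => X i j k l)))).
  apply rsum_ext; intros i _. apply (rsum_comm n n (fun j k => rsum n (fun l => X i j k l))).
Qed.

(* The entries of [A^T A - I] have square sum [|A A^T|^2 - 2 tr (A^T A) + n = 0]. *)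
Lemma orthonormal_cols n (A : nat -> nat -> R) :
  (forall i j, (i < n)%nat -> (j < n)%nat -> rsum n (fun k => A i k * A j k) = kron i j) ->
  forall k l, (k < n)%nat -> (l < n)%nat -> rsum n (fun i => A i k * A i l) = kron k l.
Proof.
  intros Hrows.
  set (P k l := rsum n (fun i => A i k * A i l)).
  assert (Hdiag : forall i, (i < n)%nat -> rsum n (fun j => kron i j ^ 2) = 1).
  { intros i Hi. rewrite (rsum_ext n _ (fun j => 1 * kron i j)) by (intros; rewrite kron_sq; ring).
    apply (rsum_kron_r n i (fun _ => 1) Hi). }
  assert (Htr : rsum n (fun k => rsum n (fun l => P k l * kron k l)) = INR n).
  { rewrite (rsum_ext n _ (fun k => P k k)) by (intros; apply rsum_kron_r; assumption).
    unfold P. rewrite rsum_comm, (rsum_ext n _ (fun _ => 1)), rsum_const; [ring|].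
    intros i Hi. rewrite Hrows by assumption. unfold kron. rewrite Nat.eqb_refl. reflexivity. }
  assert (Hsq : rsum n (fun k => rsum n (fun l => P k l ^ 2)) = INR n).
  { unfold P. rewrite rsum_gram_sq, (rsum_ext n _ (fun _ => 1)), rsum_const; [ring|].
    intros i Hi. rewrite <- (Hdiag i Hi). apply rsum_ext; intros j Hj. rewrite Hrows; auto. }
  assert (Hdev : rsum n (fun k => rsum n (fun l => (P k l - kron k l) ^ 2)) = 0).
  { transitivity (rsum n (fun k => rsum n (fun l => P k l ^ 2))
      + -2 * rsum n (fun k => rsum n (fun l => P k l * kron k l))
      + rsum n (fun k => rsum n (fun l => kron k l ^ 2))).
    - rewrite <- rsum_scal_l, <- !rsum_add. apply rsum_ext; intros k _.
      rewrite <- rsum_scal_l, <- !rsum_add. apply rsum_ext; intros l _. ring.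
    - rewrite Hsq, Htr, (rsum_ext n _ (fun _ => 1)), rsum_const by exact Hdiag. ring. }
  intros k l Hk Hl.
  assert (Hnn : forall k l, 0 <= (P k l - kron k l) ^ 2) by (intros; apply pow2_ge_0).
  pose proof (rsum_eq0_nonneg n _ (fun k _ => rsum_nonneg n _ (fun l _ => Hnn k l)) Hdev k Hk)
    as Hrow.
  pose proof (rsum_eq0_nonneg n _ (fun l _ => Hnn k l) Hrow l Hl) as Hkl.
  fold (P k l). nra.
Qed.

(** * Octonions *)

(* [omul] with the structure constants [mcoef] expanded, so that identities between
   products reduce to [ring] coordinate by coordinate. *)
Definition omul_table (a b : Oct) : Oct := fun k => match k with
  | 0%nat => a 0%nat * b 0%nat - a 1%nat * b 1%nat - a 2%nat * b 2%nat - a 3%nat * b 3%nat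
           - a 4%nat * b 4%nat - a 5%nat * b 5%nat - a 6%nat * b 6%nat - a 7%nat * b 7%nat
  | 1%nat => a 0%nat * b 1%nat + a 1%nat * b 0%nat + a 2%nat * b 3%nat - a 3%nat * b 2%nat
           + a 4%nat * b 5%nat - a 5%nat * b 4%nat - a 6%nat * b 7%nat + a 7%nat * b 6%nat
  | 2%nat => a 0%nat * b 2%nat - a 1%nat * b 3%nat + a 2%nat * b 0%nat + a 3%nat * b 1%nat
           + a 4%nat * b 6%nat + a 5%nat * b 7%nat - a 6%nat * b 4%nat - a 7%nat * b 5%nat
  | 3%nat => a 0%nat * b 3%nat + a 1%nat * b 2%nat - a 2%nat * b 1%nat + a 3%nat * b 0%nat
           + a 4%nat * b 7%nat - a 5%nat * b 6%nat + a 6%nat * b 5%nat - a 7%nat * b 4%nat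
  | 4%nat => a 0%nat * b 4%nat - a 1%nat * b 5%nat - a 2%nat * b 6%nat - a 3%nat * b 7%nat
           + a 4%nat * b 0%nat + a 5%nat * b 1%nat + a 6%nat * b 2%nat + a 7%nat * b 3%nat
  | 5%nat => a 0%nat * b 5%nat + a 1%nat * b 4%nat - a 2%nat * b 7%nat + a 3%nat * b 6%nat
           - a 4%nat * b 1%nat + a 5%nat * b 0%nat - a 6%nat * b 3%nat + a 7%nat * b 2%nat
  | 6%nat => a 0%nat * b 6%nat + a 1%nat * b 7%nat + a 2%nat * b 4%nat - a 3%nat * b 5%nat
           - a 4%nat * b 2%nat + a 5%nat * b 3%nat + a 6%nat * b 0%nat - a 7%nat * b 1%nat
  | 7%nat => a 0%nat * b 7%nat - a 1%nat * b 6%nat + a 2%nat * b 5%nat + a 3%nat * b 4%nat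
           - a 4%nat * b 3%nat - a 5%nat * b 2%nat + a 6%nat * b 1%nat + a 7%nat * b 0%nat
  | _ => 0 end.

Ltac coordwise :=
  let k := fresh "k" in
  apply functional_extensionality; intro k;
  do 8 (destruct k as [|k];
        [cbv [omul_table oconj oscale clean onorm2 rsum Nat.ltb Nat.leb Nat.eqb]; ring|]);
  reflexivity.

Lemma omul_tableE a b : omul a b = omul_table a b.
Proof.
  apply functional_extensionality; intro k.
  do 8 (destruct k as [|k];
        [cbv [omul omul_table rsum mcoef eps eps_pos List.existsb eps_triples kron Nat.eqb clean
              andb orb Nat.ltb Nat.leb]; ring|]).
  reflexivity.
Qed.

Lemma onorm2_omul a b : onorm2 (omul a b) = onorm2 a * onorm2 b.
Proof. rewrite omul_tableE. cbv [onorm2 rsum omul_table]. ring. Qed.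

Lemma omul_conj_l a b : omul a (omul (oconj a) b) = oscale (onorm2 a) b.
Proof. rewrite !omul_tableE. coordwise. Qed.

Lemma omul_oscale_r a c b : omul a (oscale c b) = oscale c (omul a b).
Proof. rewrite !omul_tableE. coordwise. Qed.

Lemma omul_clean_l a b : omul (clean a) b = omul a b.
Proof. rewrite !omul_tableE. coordwise. Qed.

Lemma oscale_oscale a b x : oscale a (oscale b x) = oscale (a * b) x.
Proof. coordwise. Qed.

Lemma oscale_clean c x : oscale c (clean x) = oscale c x.
Proof. coordwise. Qed.

Lemma oscale_1 x : oscale 1 x = clean x.
Proof. coordwise. Qed.

Lemma onorm2_oscale a x : onorm2 (oscale a x) = a ^ 2 * onorm2 x.
Proof. cbv [onorm2 oscale clean rsum Nat.ltb Nat.leb]. ring. Qed.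

Lemma onorm2_scaled s x : onorm2 (fun k => s * x k) = s ^ 2 * onorm2 x.
Proof. cbv [onorm2 rsum]. ring. Qed.

Lemma onorm2_oconj x : onorm2 (oconj x) = onorm2 x.
Proof. cbv [onorm2 oconj clean rsum Nat.ltb Nat.leb Nat.eqb]. ring. Qed.

Lemma onorm2_nonneg x : 0 <= onorm2 x.
Proof. cbv [onorm2 rsum]. nra. Qed.

Lemma onorm2_oinv y : onorm2 y <> 0 -> onorm2 (oinv y) = / onorm2 y.
Proof. intros Hy. unfold oinv. rewrite onorm2_oscale, onorm2_oconj. field. exact Hy. Qed.

Lemma onorm_sq x : onorm x ^ 2 = onorm2 x.
Proof. apply pow2_sqrt, onorm2_nonneg. Qed.

Lemma onorm_pos x : 0 < onorm2 x -> 0 < onorm x.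
Proof. apply sqrt_lt_R0. Qed.

Lemma onorm_scaled s x : 0 <= s -> onorm (fun k => s * x k) = s * onorm x.
Proof.
  intros Hs. unfold onorm.
  rewrite onorm2_scaled, sqrt_mult_alt, sqrt_pow2 by (auto; apply pow2_ge_0).
  reflexivity.
Qed.

Lemma onorm_omul a b : onorm (omul a b) = onorm a * onorm b.
Proof. unfold onorm. rewrite onorm2_omul. apply sqrt_mult; apply onorm2_nonneg. Qed.

Lemma unit_oscale y : 0 < onorm2 y -> onorm2 (oscale (/ onorm y) y) = 1.
Proof.
  intros Hy. pose proof (onorm_pos y Hy). rewrite onorm2_oscale, <- onorm_sq. field. lra.
Qed.

Lemma oinner_e0 z : oinner e0 z = z 0%nat.
Proof. cbv [oinner rsum e0 Nat.eqb]. ring. Qed.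

Lemma oinner_kron z k : (k < 8)%nat -> oinner z (fun l => kron k l) = z k.
Proof. intros Hk. apply rsum_kron_r. exact Hk. Qed.

Lemma oinner_comm a b : oinner a b = oinner b a.
Proof. cbv [oinner rsum]. ring. Qed.

Lemma oinner_self a : oinner a a = onorm2 a.
Proof. cbv [oinner onorm2 rsum]. ring. Qed.

Lemma onorm_oscale a x : 0 <= a -> onorm (oscale a x) = a * onorm x.
Proof.
  intros Ha. unfold onorm.
  rewrite onorm2_oscale, sqrt_mult_alt, sqrt_pow2 by (auto; apply pow2_ge_0).
  reflexivity.
Qed.

Lemma oscale_0 a x : oscale a x 0%nat = a * x 0%nat.
Proof. reflexivity. Qed.

Lemma onorm_lt x y : onorm2 x < onorm2 y -> onorm x < onorm y.
Proof. intros H. apply sqrt_lt_1_alt. split; [apply onorm2_nonneg | exact H]. Qed.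

Lemma onorm2_pos_of_ratio x y : 0 < onorm x / onorm y -> 0 < onorm2 x.
Proof.
  intros H. destruct (Req_dec (onorm2 x) 0) as [H0|H0].
  - unfold onorm in H. rewrite H0, sqrt_0 in H. unfold Rdiv in H. lra.
  - pose proof (onorm2_nonneg x). lra.
Qed.

Lemma Rinv_sqrt_sq c : 0 < c -> (/ sqrt c) ^ 2 * c = 1.
Proof. intros Hc. rewrite pow_inv, pow2_sqrt by lra. field. lra. Qed.

(** * The exponential map of S^7 and cylindrical coordinates *)

Section ExpMap.

Variable Y : nat -> Oct.
Hypothesis Y_frame : orthonormal_frame_at_e0 Y.

Definition tangent (th : nat -> R) : Oct := fun k => rsum 7 (fun i => th (S i) * Y (S i) k).

(* [e0, Y 1, ..., Y 7] is an orthonormal basis of R^8, so its columns are orthonormal too. *)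
Lemma frame_complete k l : (k < 8)%nat -> (l < 8)%nat ->
  rsum 7 (fun i => Y (S i) k * Y (S i) l) = kron k l - e0 k * e0 l.
Proof.
  destruct Y_frame as [Y0 Yorth].
  set (B := fun i => match i with O => e0 | S _ => Y i end).
  assert (Borth : forall i j, (i < 8)%nat -> (j < 8)%nat ->
            rsum 8 (fun k => B i k * B j k) = kron i j).
  { intros [|i] [|j] Hi Hj; unfold B; cbv beta iota.
    - cbv [rsum e0 kron Nat.eqb]. ring.
    - change (oinner e0 (Y (S j)) = kron 0 (S j)). rewrite oinner_e0, Y0 by lia. reflexivity.
    - rewrite (rsum_ext 8 _ (fun k => e0 k * Y (S i) k)) by (intros; ring).
      change (oinner e0 (Y (S i)) = kron (S i) 0). rewrite oinner_e0, Y0 by lia. reflexivity.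
    - apply Yorth; lia. }
  intros Hk Hl. rewrite <- (orthonormal_cols 8 B Borth k l Hk Hl), (rsum_shift 7).
  unfold B; cbv beta iota. ring.
Qed.

Lemma frame_bilinear a b :
  rsum 7 (fun i => oinner a (Y (S i)) * oinner b (Y (S i))) = oinner a b - a 0%nat * b 0%nat.
Proof.
  set (X i k l := a k * b l * (Y (S i) k * Y (S i) l)).
  transitivity (rsum 8 (fun k => rsum 8 (fun l => rsum 7 (fun i => X i k l)))).
  - transitivity (rsum 7 (fun i => rsum 8 (fun k => rsum 8 (fun l => X i k l)))).
    + apply rsum_ext; intros i _. unfold oinner. rewrite rsum_mul.
      apply rsum_ext; intros k _; apply rsum_ext; intros l _. unfold X. ring.
    + rewrite <- rsum_comm. apply rsum_ext; intros k _. symmetry. apply rsum_comm.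
  - rewrite (rsum_ext 8 _ (fun k => a k * b k - a k * e0 k * b 0%nat)).
    + cbv [oinner rsum e0 Nat.eqb]. ring.
    + intros k Hk.
      rewrite (rsum_ext 8 _ (fun l => a k * b l * kron k l + - (a k * e0 k) * (e0 l * b l))).
      * rewrite rsum_add, rsum_scal_l, (rsum_kron_r 8 k (fun l => a k * b l) Hk).
        change (rsum 8 (fun l => e0 l * b l)) with (oinner e0 b). rewrite oinner_e0. ring.
      * intros l Hl. unfold X. rewrite rsum_scal_l, frame_complete by assumption. ring.
Qed.

Lemma tangent_0 th : tangent th 0%nat = 0.
Proof.
  destruct Y_frame as [Y0 _]. unfold tangent.
  rewrite (rsum_ext 7 _ (fun _ => 0)), rsum_const; [ring|].
  intros i Hi. rewrite Y0 by lia. ring.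
Qed.

Lemma oinner_tangent th j : (j < 7)%nat -> oinner (tangent th) (Y (S j)) = th (S j).
Proof.
  destruct Y_frame as [_ Yorth]. intros Hj. unfold oinner, tangent.
  rewrite (rsum_ext 8 _ (fun k => rsum 7 (fun i => th (S i) * (Y (S i) k * Y (S j) k))))
    by (intros; rewrite <- rsum_scal_r; apply rsum_ext; intros; ring).
  rewrite rsum_comm, (rsum_ext 7 _ (fun i => th (S i) * kron j i)).
  - exact (rsum_kron_r 7 j (fun i => th (S i)) Hj).
  - intros i Hi. rewrite rsum_scal_l, kron_sym. f_equal.
    exact (Yorth (S i) (S j) ltac:(lia) ltac:(lia)).
Qed.

Lemma onorm2_tangent th : onorm2 (tangent th) = thnorm th ^ 2.
Proof.
  unfold thnorm. rewrite pow2_sqrt by (apply rsum_nonneg; intros; apply pow2_ge_0).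
  rewrite <- oinner_self.
  replace (oinner (tangent th) (tangent th))
    with (oinner (tangent th) (tangent th) - tangent th 0%nat * tangent th 0%nat)
    by (rewrite tangent_0; ring).
  rewrite <- frame_bilinear. apply rsum_ext; intros i Hi. rewrite oinner_tangent by exact Hi. ring.
Qed.

Lemma expS7_coord th k : (k < 8)%nat ->
  expS7 Y th k = cos (thnorm th) * e0 k + sin (thnorm th) / thnorm th * tangent th k.
Proof. intros Hk. unfold expS7, clean. apply Nat.ltb_lt in Hk. rewrite Hk. reflexivity. Qed.

Lemma expS7_0 th : expS7 Y th 0%nat = cos (thnorm th).
Proof. rewrite expS7_coord, tangent_0 by lia. cbv [e0 Nat.eqb]. ring. Qed.

Lemma onorm2_expS7 th : 0 < thnorm th -> onorm2 (expS7 Y th) = 1.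
Proof.
  intros Hth. set (eta := thnorm th) in *.
  transitivity (cos eta ^ 2 + (sin eta / eta) ^ 2 * onorm2 (tangent th)).
  - unfold onorm2 at 1.
    rewrite (rsum_ext 8 _ (fun k => (cos eta * e0 k + sin eta / eta * tangent th k) ^ 2))
      by (intros; rewrite expS7_coord; auto).
    unfold onorm2. cbv [rsum e0 Nat.eqb]. rewrite tangent_0. ring.
  - rewrite onorm2_tangent. fold eta. pose proof (sin2_cos2 eta). unfold Rsqr in *.
    field_simplify; lra.
Qed.

Lemma expS7_onto u : onorm2 u = 1 -> -1 < u 0%nat < 1 ->
  exists th, thnorm th = acos (u 0%nat) /\ expS7 Y th = clean u.
Proof.
  intros Hu Hu0.
  set (eta := acos (u 0%nat)).
  assert (Heta : 0 < eta < PI) by (apply acos_bound_lt; exact Hu0).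
  set (s := sin eta).
  assert (Hs : 0 < s) by (apply sin_gt_0; lra).
  assert (Hs2 : s ^ 2 = 1 - u 0%nat ^ 2).
  { unfold s, eta. rewrite sin_acos, pow2_sqrt by (unfold Rsqr; nra). unfold Rsqr. ring. }
  set (th i := eta / s * oinner u (Y i)).
  assert (Hth : thnorm th = eta).
  { unfold thnorm, th.
    rewrite (rsum_ext 7 _ (fun i => (eta / s) ^ 2 * (oinner u (Y (S i)) * oinner u (Y (S i)))))
      by (intros; ring).
    rewrite rsum_scal_l, frame_bilinear, oinner_self, Hu.
    replace (1 - u 0%nat * u 0%nat) with (s ^ 2) by (rewrite Hs2; ring).
    replace ((eta / s) ^ 2 * s ^ 2) with (eta ^ 2) by (field; lra).
    apply sqrt_pow2. lra. }
  exists th. split; [exact Hth|].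
  apply functional_extensionality; intro k. unfold clean.
  destruct (Nat.ltb_spec k 8) as [Hk|Hk].
  - rewrite expS7_coord, Hth by exact Hk. fold eta s.
    assert (Htan : tangent th k = eta / s * (u k - u 0%nat * e0 k)).
    { unfold tangent, th.
      rewrite (rsum_ext 7 _ (fun i => eta / s *
                 (oinner u (Y (S i)) * oinner (fun l => kron k l) (Y (S i))))).
      - rewrite rsum_scal_l, frame_bilinear, oinner_kron by exact Hk. reflexivity.
      - intros i Hi. unfold th. rewrite (oinner_comm (fun l => kron k l)), oinner_kron by exact Hk.
        ring. }
    rewrite Htan. unfold eta at 1. rewrite cos_acos by lra. field. lra.
  - unfold expS7, clean. destruct (Nat.ltb_spec k 8); [lia|reflexivity].
Qed.

End ExpMap.

Section Cylindrical.

Variable Y : nat -> Oct.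
Hypothesis Y_frame : orthonormal_frame_at_e0 Y.

Lemma psi_onto x y : AdS x y -> -1 < y 0%nat / onorm y < 1 ->
  exists w th, onorm w < 1 /\ thnorm th < PI /\
    psi_x Y w th = clean x /\ psi_y Y w th = clean y /\
    onorm w = onorm x / onorm y /\ thnorm th = acos (y 0%nat / onorm y).
Proof.
  intros Hads Hc. unfold AdS in Hads.
  pose proof (onorm2_nonneg x) as Hx.
  set (N := onorm y).
  assert (HN : 0 < N) by (apply onorm_pos; lra).
  assert (HxN : onorm x < N) by (apply onorm_lt; lra).
  set (u := oscale (/ N) y).
  assert (Hu : onorm2 u = 1) by (apply unit_oscale; lra).
  destruct (expS7_onto Y Y_frame u Hu) as [th [Hth Hexp]].
  { unfold u. rewrite oscale_0.
    replace (/ N * y 0%nat) with (y 0%nat / N) by (field; lra). exact Hc. }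
  set (w := oscale (/ N) (omul (oconj u) x)).
  assert (Hw : onorm w = onorm x / N).
  { unfold w. rewrite onorm_oscale, onorm_omul by (left; apply Rinv_0_lt_compat, HN).
    unfold onorm at 1. rewrite onorm2_oconj, Hu, sqrt_1. field. lra. }
  assert (Hscale : / sqrt (1 - onorm2 w) = N).
  { assert (HNx : N ^ 2 - onorm x ^ 2 = 1) by (unfold N; rewrite !onorm_sq; lra).
    rewrite <- onorm_sq, Hw.
    replace (1 - (onorm x / N) ^ 2) with ((N ^ 2 - onorm x ^ 2) * (/ N) ^ 2) by (field; lra).
    rewrite HNx, Rmult_1_l.
    rewrite sqrt_pow2 by (left; apply Rinv_0_lt_compat, HN). field. lra. }
  exists w, th. repeat split.
  - rewrite Hw. unfold Rdiv. rewrite <- (Rinv_r N) by lra.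
    apply Rmult_lt_compat_r; [apply Rinv_0_lt_compat|]; lra.
  - rewrite Hth. apply acos_bound_lt. unfold u. rewrite oscale_0.
    replace (/ N * y 0%nat) with (y 0%nat / N) by (field; lra). exact Hc.
  - unfold psi_x. rewrite Hscale, Hexp, omul_clean_l. unfold w.
    rewrite omul_oscale_r, omul_conj_l, Hu, !oscale_oscale.
    replace (N * / N * 1) with 1 by (field; lra). apply oscale_1.
  - unfold psi_y. rewrite Hscale, Hexp, oscale_clean. unfold u. rewrite oscale_oscale.
    replace (N * / N) with 1 by (field; lra). apply oscale_1.
  - exact Hw.
  - rewrite Hth. unfold u. rewrite oscale_0. f_equal. unfold Rdiv. ring.
Qed.

Lemma psi_AdS w th : onorm w < 1 -> 0 < thnorm th ->
  AdS (psi_x Y w th) (psi_y Y w th) /\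
  onorm (psi_x Y w th) / onorm (psi_y Y w th) = onorm w /\
  psi_y Y w th 0%nat / onorm (psi_y Y w th) = cos (thnorm th).
Proof.
  intros Hw Hth.
  pose proof (onorm2_nonneg w) as Hw0.
  assert (Hw2 : onorm2 w < 1)
    by (rewrite <- onorm_sq; assert (0 <= onorm w) by apply sqrt_pos; nra).
  set (a := / sqrt (1 - onorm2 w)).
  assert (Ha : 0 < a) by (apply Rinv_0_lt_compat, sqrt_lt_R0; lra).
  assert (Ha2 : a ^ 2 * (1 - onorm2 w) = 1) by (apply Rinv_sqrt_sq; lra).
  pose proof (onorm2_expS7 Y Y_frame th Hth) as HE.
  assert (HEn : onorm (expS7 Y th) = 1) by (unfold onorm; rewrite HE; apply sqrt_1).
  unfold psi_x, psi_y. fold a. repeat split.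
  - unfold AdS. rewrite !onorm2_oscale, onorm2_omul, HE. lra.
  - rewrite !onorm_oscale, onorm_omul, HEn by lra. field. lra.
  - rewrite oscale_0, (expS7_0 Y Y_frame), onorm_oscale, HEn by lra. field. lra.
Qed.

End Cylindrical.

Section FunctionOnAdS.

Variables (Y : nat -> Oct) (f : R -> R -> R) (F : Oct -> Oct -> R).
Hypothesis Y_frame : orthonormal_frame_at_e0 Y.
Hypothesis F_psi : forall w th, onorm w < 1 -> thnorm th < PI ->
  F (psi_x Y w th) (psi_y Y w th) = f (onorm w) (thnorm th).

Lemma F_on_AdS x y : AdS x y -> -1 < y 0%nat / onorm y < 1 ->
  F (clean x) (clean y) = f (onorm x / onorm y) (acos (y 0%nat / onorm y)).
Proof.
  intros Hads Hc.
  destruct (psi_onto Y Y_frame x y Hads Hc) as (w & th & Hw & Hth & <- & <- & <- & <-).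
  apply F_psi; assumption.
Qed.

Lemma homog_eq x y : onorm2 x < onorm2 y -> -1 < y 0%nat / onorm y < 1 ->
  homog F x y = f (onorm x / onorm y) (acos (y 0%nat / onorm y)).
Proof.
  intros Hxy Hc. unfold homog.
  set (s := / sqrt (onorm2 y - onorm2 x)).
  assert (Hs : 0 < s) by (apply Rinv_0_lt_compat, sqrt_lt_R0; lra).
  assert (Hs2 : s ^ 2 * (onorm2 y - onorm2 x) = 1) by (apply Rinv_sqrt_sq; lra).
  assert (Hy : 0 < onorm y) by (apply onorm_pos; pose proof (onorm2_nonneg x); lra).
  unfold oscale. rewrite F_on_AdS.
  - rewrite !onorm_scaled by lra. f_equal; [|f_equal]; field; lra.
  - unfold AdS. rewrite !onorm2_scaled. lra.
  - rewrite onorm_scaled by lra.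
    replace (s * y 0%nat / (s * onorm y)) with (y 0%nat / onorm y) by (field; lra). exact Hc.
Qed.

Lemma vertical_eq x y v : AdS x y -> 0 < onorm2 v -> -1 < v 0%nat / onorm v < 1 ->
  F (oscale (onorm y) (omul (oscale (/ onorm v) v) (omul (oinv y) x)))
    (oscale (onorm y) (oscale (/ onorm v) v)) =
  f (onorm x / onorm y) (acos (v 0%nat / onorm v)).
Proof.
  intros Hads Hv Hc. unfold AdS in Hads.
  pose proof (onorm2_nonneg x).
  assert (Hy : 0 < onorm y) by (apply onorm_pos; lra).
  assert (Hvn : 0 < onorm v) by (apply onorm_pos; lra).
  set (u := oscale (/ onorm v) v).
  assert (Hu : onorm u = 1).
  { change (sqrt (onorm2 (oscale (/ onorm v) v)) = 1).
    rewrite unit_oscale by exact Hv. apply sqrt_1. }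
  assert (Hyinv : onorm (oinv y) = / onorm y).
  { unfold onorm at 1. rewrite onorm2_oinv, sqrt_inv by lra. reflexivity. }
  unfold oscale at 1 2. rewrite F_on_AdS.
  - rewrite !onorm_scaled, onorm_omul, onorm_omul, Hu, Hyinv by lra.
    f_equal; [field; lra|]. f_equal. unfold u. rewrite oscale_0. field. lra.
  - unfold AdS.
    rewrite !onorm2_scaled, onorm2_omul, onorm2_omul, onorm2_oinv, <- !onorm_sq, Hu by lra.
    rewrite <- !onorm_sq in Hads. field_simplify; lra.
  - rewrite onorm_scaled, Hu by lra. unfold u. rewrite oscale_0.
    replace (onorm y * (/ onorm v * v 0%nat) / (onorm y * 1)) with (v 0%nat / onorm v)
      by (field; lra).
    exact Hc.
Qed.

End FunctionOnAdS.

(** * Calculus *)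

Lemma deriv_eq g t l : derivable_pt_lim g t l -> deriv g t = l.
Proof.
  intros H. unfold deriv.
  apply (uniqueness_limite g t); [|exact H].
  apply (epsilon_spec (inhabits 0) (fun l => derivable_pt_lim g t l)). exists l. exact H.
Qed.

Lemma derivable_pt_lim_ext_loc g1 g2 t l :
  locally t (fun s => g1 s = g2 s) -> derivable_pt_lim g1 t l -> derivable_pt_lim g2 t l.
Proof.
  intros Heq H. apply is_derive_Reals, (is_derive_ext_loc g1); [exact Heq|].
  apply is_derive_Reals, H.
Qed.

Lemma derivable_pt_lim_shift g t l :
  derivable_pt_lim g t l -> derivable_pt_lim (fun s => g (t + s)) 0 l.
Proof.
  intros H. rewrite <- (Rmult_1_r l).
  apply (derivable_pt_lim_comp (fun s => t + s) g).
  - rewrite <- (Rplus_0_l 1).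
    apply derivable_pt_lim_plus; [apply derivable_pt_lim_const | apply derivable_pt_lim_id].
  - rewrite Rplus_0_r. exact H.
Qed.

Lemma locally_shift (P : R -> Prop) t : locally t P -> locally 0 (fun s => P (t + s)).
Proof.
  intros H. assert (Hc : continuity_pt (fun s => t + s) 0) by (apply derivable_continuous_pt; reg).
  apply continuity_pt_filterlim in Hc. rewrite Rplus_0_r in Hc. exact (Hc P H).
Qed.

Lemma locally_between h x l a b :
  derivable_pt_lim h x l -> a < h x < b -> locally x (fun t => a < h t < b).
Proof.
  intros Hd Hab.
  assert (Hc : continuity_pt h x) by (apply derivable_continuous_pt; exists l; exact Hd).
  apply continuity_pt_filterlim in Hc.
  exact (Hc _ (open_and _ _ (open_gt a) (open_lt b) (h x) Hab)).
Qed.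

Lemma derivable_pt_lim_approx g b l : derivable_pt_lim g b l ->
  forall eps, 0 < eps -> exists d, 0 < d /\
    forall v, Rabs (v - b) < d -> Rabs (g v - g b - l * (v - b)) <= eps * Rabs (v - b).
Proof.
  intros H eps Heps. destruct (H eps Heps) as [d Hd].
  exists d. split; [apply cond_pos|]. intros v Hv.
  destruct (Req_dec v b) as [->|Hvb].
  - replace (g b - g b - l * (b - b)) with 0 by ring. rewrite Rminus_diag, !Rabs_R0. lra.
  - specialize (Hd (v - b) ltac:(lra) Hv). replace (b + (v - b)) with v in Hd by ring.
    replace (g v - g b - l * (v - b)) with (((g v - g b) / (v - b) - l) * (v - b)) by (field; lra).
    rewrite Rabs_mult. apply Rmult_le_compat_r; [apply Rabs_pos | lra].
Qed.

(* Mean value theorem in the first variable, linear approximation in the second. *)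
Lemma differentiable_pt_lim_partials (f : R -> R -> R) a b :
  locally_2d (fun u v => derivable_pt_lim (fun s => f s v) u (p1 f u v)) a b ->
  continuity_2d_pt (p1 f) a b ->
  derivable_pt_lim (fun s => f a s) b (p2 f a b) ->
  differentiable_pt_lim f a b (p1 f a b) (p2 f a b).
Proof.
  intros [d Hd] Hc Hb eps.
  assert (He2 : 0 < eps / 2) by (pose proof (cond_pos eps); lra).
  destruct (Hc (mkposreal _ He2)) as [d1 Hd1]. simpl in Hd1.
  destruct (derivable_pt_lim_approx _ _ _ Hb _ He2) as [d2 [Hd2 Happrox]].
  assert (Hdm : 0 < Rmin d (Rmin d1 d2)) by (repeat apply Rmin_pos; try apply cond_pos; lra).
  exists (mkposreal _ Hdm). simpl. intros u v Hu Hv.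
  pose proof (Rmin_l d (Rmin d1 d2)). pose proof (Rmin_r d (Rmin d1 d2)).
  pose proof (Rmin_l d1 d2). pose proof (Rmin_r d1 d2).
  assert (Hbox : forall s, Rmin a u <= s <= Rmax a u -> Rabs (s - a) <= Rabs (u - a)).
  { unfold Rmin, Rmax. intros s.
    destruct (Rle_dec a u); unfold Rabs; repeat destruct Rcase_abs; lra. }
  destruct (MVT_gen (fun s => f s v) a u (fun s => p1 f s v)) as [c [Hcau Hmvt]].
  { intros s Hs. apply is_derive_Reals, Hd; [specialize (Hbox s ltac:(lra)) | ]; lra. }
  { intros s Hs. apply derivable_continuous_pt. exists (p1 f s v).
    apply Hd; [specialize (Hbox s Hs) | ]; lra. }
  specialize (Hbox c Hcau).
  specialize (Hd1 c v ltac:(lra) ltac:(lra)).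
  specialize (Happrox v ltac:(lra)).
  replace (f u v - f a b - (p1 f a b * (u - a) + p2 f a b * (v - b)))
    with ((p1 f c v - p1 f a b) * (u - a) + (f a v - f a b - p2 f a b * (v - b)))
    by (simpl in Hmvt; lra).
  eapply Rle_trans; [apply Rabs_triang|]. rewrite Rabs_mult.
  assert (Hmax : Rabs (u - a) <= Rmax (Rabs (u - a)) (Rabs (v - b))
                 /\ Rabs (v - b) <= Rmax (Rabs (u - a)) (Rabs (v - b)))
    by (split; [apply Rmax_l | apply Rmax_r]).
  pose proof (Rabs_pos (u - a)). pose proof (Rabs_pos (p1 f c v - p1 f a b)).
  assert (Rabs (p1 f c v - p1 f a b) * Rabs (u - a) <= eps / 2 * Rabs (u - a))
    by (apply Rmult_le_compat_r; lra).
  nra.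
Qed.

Lemma upd_upd x i t s : upd (upd x i t) i s = upd x i (t + s).
Proof.
  apply functional_extensionality; intro k. unfold upd.
  destruct (Nat.eqb k i); ring.
Qed.

(* [Defs.d2] is qualified because Coquelicot exports an unrelated [d2]. *)
Lemma d2_of_line H z i phi phi1 L :
  locally 0 (fun t => H (upd z i t) = phi t) ->
  locally 0 (fun t => derivable_pt_lim phi t (phi1 t)) ->
  derivable_pt_lim phi1 0 L -> Defs.d2 i H z = L.
Proof.
  intros HH Hphi HL. unfold Defs.d2. apply deriv_eq.
  apply derivable_pt_lim_ext_loc with phi1; [|exact HL].
  generalize (filter_and _ _ (locally_locally _ _ HH) Hphi). apply filter_imp.
  intros t [Ht Hdt]. symmetry. apply deriv_eq.
  apply derivable_pt_lim_ext_loc with (fun s => phi (t + s)).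
  - apply (filter_imp (fun s => H (upd z i (t + s)) = phi (t + s))).
    + intros s Hs. rewrite upd_upd. symmetry. exact Hs.
    + exact (locally_shift _ t Ht).
  - apply derivable_pt_lim_shift, Hdt.
Qed.

Definition comp_deriv2 (f : R -> R -> R) a b A1 B1 A2 B2 : R :=
  p1 (p1 f) a b * A1 ^ 2 + (p2 (p1 f) a b + p1 (p2 f) a b) * A1 * B1 + p2 (p2 f) a b * B1 ^ 2
  + p1 f a b * A2 + p2 f a b * B2.

Section SmoothComposition.

Variables (U : R -> R -> Prop) (f : R -> R -> R).
Hypothesis U_open : forall a b, U a b -> locally_2d U a b.
Hypothesis f_smooth : smooth_on U f.

Lemma smooth_partial1 ws a b : U a b ->
  derivable_pt_lim (fun s => iterp ws f s b) a (p1 (iterp ws f) a b).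
Proof.
  intros H. destruct (f_smooth ws a b H) as [[l Hl] _].
  unfold p1. rewrite (deriv_eq _ _ _ Hl). exact Hl.
Qed.

Lemma smooth_partial2 ws a b : U a b ->
  derivable_pt_lim (fun s => iterp ws f a s) b (p2 (iterp ws f) a b).
Proof.
  intros H. destruct (f_smooth ws a b H) as [_ [[l Hl] _]].
  unfold p2. rewrite (deriv_eq _ _ _ Hl). exact Hl.
Qed.

Lemma smooth_differentiable ws a b : U a b ->
  differentiable_pt_lim (iterp ws f) a b (p1 (iterp ws f) a b) (p2 (iterp ws f) a b).
Proof.
  intros H. apply differentiable_pt_lim_partials.
  - destruct (U_open a b H) as [d Hd]. exists d. intros u v Hu Hv.
    apply smooth_partial1, Hd; assumption.
  - intros eps. destruct (f_smooth (cons true ws) a b H) as [_ [_ Hc]].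
    destruct (Hc eps (cond_pos eps)) as [d [Hd Hd']]. exists (mkposreal d Hd). exact Hd'.
  - apply smooth_partial2, H.
Qed.

Lemma smooth_chain ws A B t A1 B1 : U (A t) (B t) ->
  derivable_pt_lim A t A1 -> derivable_pt_lim B t B1 ->
  derivable_pt_lim (fun s => iterp ws f (A s) (B s)) t
    (p1 (iterp ws f) (A t) (B t) * A1 + p2 (iterp ws f) (A t) (B t) * B1).
Proof.
  intros HU HA HB.
  exact (derivable_pt_lim_comp_2d _ _ _ _ _ _ _ _ (smooth_differentiable ws _ _ HU) HA HB).
Qed.

Lemma locally_in_U A B t A1 B1 : derivable_pt_lim A t A1 -> derivable_pt_lim B t B1 ->
  U (A t) (B t) -> locally t (fun s => U (A s) (B s)).
Proof.
  intros HA HB HU. destruct (U_open _ _ HU) as [d Hd].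
  pose proof (cond_pos d).
  assert (LA := locally_between A t A1 (A t - d) (A t + d) HA ltac:(lra)).
  assert (LB := locally_between B t B1 (B t - d) (B t + d) HB ltac:(lra)).
  apply (filter_imp (fun s => (A t - d < A s < A t + d) /\ (B t - d < B s < B t + d))).
  - intros s [Ha Hb]. apply Hd; apply Rabs_def1; lra.
  - exact (filter_and _ _ LA LB).
Qed.

Section Composite.

Variables (A B A1 B1 : R -> R) (t0 A2 B2 : R).
Hypothesis AB_derivable :
  locally t0 (fun t => derivable_pt_lim A t (A1 t) /\ derivable_pt_lim B t (B1 t)).
Hypothesis A1_derivable : derivable_pt_lim A1 t0 A2.
Hypothesis B1_derivable : derivable_pt_lim B1 t0 B2.
Hypothesis AB_in_U : U (A t0) (B t0).

Lemma comp_derivable_near : locally t0 (fun t =>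
  derivable_pt_lim (fun s => f (A s) (B s)) t
    (p1 f (A t) (B t) * A1 t + p2 f (A t) (B t) * B1 t)).
Proof.
  destruct (locally_singleton _ _ AB_derivable) as [HA HB].
  generalize (filter_and _ _ (locally_in_U _ _ _ _ _ HA HB AB_in_U) AB_derivable).
  apply filter_imp. intros t [HU [HAt HBt]]. exact (smooth_chain nil A B t _ _ HU HAt HBt).
Qed.

Lemma comp_deriv1_derivable :
  derivable_pt_lim (fun t => p1 f (A t) (B t) * A1 t + p2 f (A t) (B t) * B1 t) t0
    (comp_deriv2 f (A t0) (B t0) (A1 t0) (B1 t0) A2 B2).
Proof.
  destruct (locally_singleton _ _ AB_derivable) as [HA HB].
  pose proof (smooth_chain (cons true nil) A B t0 _ _ AB_in_U HA HB) as H1.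
  pose proof (smooth_chain (cons false nil) A B t0 _ _ AB_in_U HA HB) as H2.
  pose proof (derivable_pt_lim_plus _ _ _ _ _ (derivable_pt_lim_mult _ _ _ _ _ H1 A1_derivable)
                (derivable_pt_lim_mult _ _ _ _ _ H2 B1_derivable)) as H.
  unfold comp_deriv2. cbn [iterp] in H. unfold plus_fct, mult_fct in H.
  match type of H with derivable_pt_lim _ _ ?v => replace (_ + _) with v by ring end.
  exact H.
Qed.

Lemma deriv2_comp :
  deriv (fun t => deriv (fun s => f (A s) (B s)) t) t0 =
  comp_deriv2 f (A t0) (B t0) (A1 t0) (B1 t0) A2 B2.
Proof.
  apply deriv_eq.
  apply derivable_pt_lim_ext_loc
    with (fun t => p1 f (A t) (B t) * A1 t + p2 f (A t) (B t) * B1 t).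
  - apply (filter_imp _ _ (fun t Ht => eq_sym (deriv_eq _ _ _ Ht)) comp_derivable_near).
  - exact comp_deriv1_derivable.
Qed.

End Composite.

Lemma d2_comp H z i A B A1 B1 A2 B2 :
  locally 0 (fun t => H (upd z i t) = f (A t) (B t)) ->
  locally 0 (fun t => derivable_pt_lim A t (A1 t) /\ derivable_pt_lim B t (B1 t)) ->
  derivable_pt_lim A1 0 A2 -> derivable_pt_lim B1 0 B2 -> U (A 0) (B 0) ->
  Defs.d2 i H z = comp_deriv2 f (A 0) (B 0) (A1 0) (B1 0) A2 B2.
Proof.
  intros HH HAB HA2 HB2 HU.
  exact (d2_of_line H z i _ _ _ HH (comp_derivable_near _ _ _ _ _ HAB HU)
           (comp_deriv1_derivable _ _ _ _ _ _ _ HAB HA2 HB2 HU)).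
Qed.

End SmoothComposition.

Lemma sqrt_quad_derivable N q t : 0 < N + 2 * q * t + t ^ 2 ->
  derivable_pt_lim (fun s => sqrt (N + 2 * q * s + s ^ 2)) t
    ((q + t) / sqrt (N + 2 * q * t + t ^ 2)).
Proof.
  intros HQ. pose proof (sqrt_lt_R0 _ HQ).
  apply is_derive_Reals. auto_derive; replace (t * (t * 1)) with (t ^ 2) by ring.
  - exact HQ.
  - field. lra.
Qed.

Lemma sqrt_quad_deriv2 N q : 0 < N ->
  derivable_pt_lim (fun t => (q + t) / sqrt (N + 2 * q * t + t ^ 2)) 0
    (1 / sqrt N - q ^ 2 / sqrt N ^ 3).
Proof.
  intros HN. pose proof (sqrt_lt_R0 _ HN).
  apply is_derive_Reals. auto_derive; replace (N + 2 * q * 0 + 0 * (0 * 1)) with N by ring.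
  - repeat split; lra.
  - field. lra.
Qed.

Lemma cos_quad_derivable p d N q t : 0 < N + 2 * q * t + t ^ 2 ->
  derivable_pt_lim (fun s => (p + d * s) / sqrt (N + 2 * q * s + s ^ 2)) t
    (d / sqrt (N + 2 * q * t + t ^ 2)
     - (p + d * t) * (q + t) / sqrt (N + 2 * q * t + t ^ 2) ^ 3).
Proof.
  intros HQ. pose proof (sqrt_lt_R0 _ HQ).
  apply is_derive_Reals. auto_derive; replace (t * (t * 1)) with (t ^ 2) by ring.
  - split; [exact HQ | split; [lra | exact I]].
  - field. lra.
Qed.

Lemma cos_quad_deriv2 p d N q : 0 < N ->
  derivable_pt_lim
    (fun t => d / sqrt (N + 2 * q * t + t ^ 2)
              - (p + d * t) * (q + t) / sqrt (N + 2 * q * t + t ^ 2) ^ 3) 0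
    (- 2 * d * q / sqrt N ^ 3 - p / sqrt N ^ 3 + 3 * p * q ^ 2 / sqrt N ^ 5).
Proof.
  intros HN. pose proof (sqrt_lt_R0 _ HN). assert (0 < sqrt N ^ 3) by (apply pow_lt; lra).
  apply is_derive_Reals. auto_derive; replace (N + 2 * q * 0 + 0 * (0 * 1)) with N by ring.
  - repeat split; lra.
  - field. lra.
Qed.

Lemma acos_comp_derivable C t l : -1 < C t < 1 -> derivable_pt_lim C t l ->
  derivable_pt_lim (fun s => acos (C s)) t (- l / sqrt (1 - C t ^ 2)).
Proof.
  intros HC Hl.
  assert (Hacos : derivable_pt_lim acos (C t) (-1 / sqrt (1 - C t ^ 2))).
  { apply (derive_pt_eq_1 _ _ _ (derivable_pt_acos _ HC)).
    rewrite derive_pt_acos, <- Rsqr_pow2. reflexivity. }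
  replace (- l / sqrt (1 - C t ^ 2)) with (-1 / sqrt (1 - C t ^ 2) * l) by (unfold Rdiv; ring).
  exact (derivable_pt_lim_comp C acos t _ _ Hl Hacos).
Qed.

Lemma acos_comp_deriv2 C C1 C2 : -1 < C 0 < 1 ->
  derivable_pt_lim C 0 (C1 0) -> derivable_pt_lim C1 0 C2 ->
  derivable_pt_lim (fun t => - C1 t / sqrt (1 - C t ^ 2)) 0
    (- C2 / sqrt (1 - C 0 ^ 2) - C 0 * C1 0 ^ 2 / sqrt (1 - C 0 ^ 2) ^ 3).
Proof.
  intros HC HC1 HC2.
  assert (HW : 0 < 1 - C 0 ^ 2) by nra. pose proof (sqrt_lt_R0 _ HW).
  assert (DC : Derive C 0 = C1 0) by (apply is_derive_unique, is_derive_Reals, HC1).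
  assert (DC1 : Derive C1 0 = C2) by (apply is_derive_unique, is_derive_Reals, HC2).
  apply is_derive_Reals.
  auto_derive; replace (1 + - (C 0 * (C 0 * 1))) with (1 - C 0 ^ 2) by ring.
  - repeat split; try lra.
    + exists C2. apply is_derive_Reals, HC2.
    + exists (C1 0). apply is_derive_Reals, HC1.
  - change (Derive (fun x => C1 x) 0) with (Derive C1 0).
    change (Derive (fun x => C x) 0) with (Derive C 0).
    rewrite DC, DC1. field. lra.
Qed.

(** * Laplacians on R^8 *)

Definition line_C2 (a : Oct -> R) (z : Oct) (i : nat) (a1 : R -> R) (a2 : R) : Prop :=
  locally 0 (fun t => derivable_pt_lim (fun s => a (upd z i s)) t (a1 t)) /\
  derivable_pt_lim a1 0 a2.

Lemma upd_0 z i : upd z i 0 = z.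
Proof. apply functional_extensionality; intro k. unfold upd. destruct (Nat.eqb k i); ring. Qed.

Lemma upd_coord0 z i t : upd z i t 0%nat = z 0%nat + kron i 0 * t.
Proof. unfold upd, kron. destruct i; simpl; ring. Qed.

Lemma onorm2_upd z i t : (i < 8)%nat -> onorm2 (upd z i t) = onorm2 z + 2 * z i * t + t ^ 2.
Proof.
  intros Hi. unfold onorm2, upd.
  do 8 (destruct i as [|i]; [cbv [rsum Nat.eqb]; ring|]). lia.
Qed.

Lemma onorm_upd z i t : (i < 8)%nat -> onorm (upd z i t) = sqrt (onorm2 z + 2 * z i * t + t ^ 2).
Proof. intros Hi. unfold onorm. rewrite onorm2_upd by exact Hi. reflexivity. Qed.

Lemma quad_at_0 N q : N + 2 * q * 0 + 0 ^ 2 = N.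
Proof. ring. Qed.

Lemma locally_quad_between N q a b : a < N < b ->
  locally 0 (fun t => a < N + 2 * q * t + t ^ 2 < b).
Proof.
  intros HN. apply (locally_between _ _ (2 * q)); [|rewrite quad_at_0; exact HN].
  apply is_derive_Reals. auto_derive; [exact I | ring].
Qed.

Lemma locally_quad_pos N q : 0 < N -> locally 0 (fun t => 0 < N + 2 * q * t + t ^ 2).
Proof.
  intros HN. generalize (locally_quad_between N q 0 (N + 1) ltac:(lra)).
  apply filter_imp. intros t Ht. apply Ht.
Qed.

Lemma locally_onorm2_upd z i a b : (i < 8)%nat -> a < onorm2 z < b ->
  locally 0 (fun t => a < onorm2 (upd z i t) < b).
Proof.
  intros Hi Hz. generalize (locally_quad_between _ (z i) _ _ Hz).
  apply filter_imp. intros t Ht. rewrite onorm2_upd by exact Hi. exact Ht.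
Qed.

Lemma const_line c z i : line_C2 (fun _ => c) z i (fun _ => 0) 0.
Proof.
  split; [apply filter_forall; intros t|]; apply derivable_pt_lim_const.
Qed.

Lemma radial_line g g1 g2 z i : (i < 8)%nat -> 0 < onorm2 z ->
  (forall r, 0 < r -> derivable_pt_lim g r (g1 r)) -> derivable_pt_lim g1 (onorm z) g2 ->
  line_C2 (fun v => g (onorm v)) z i
    (fun t => g1 (onorm (upd z i t)) * ((z i + t) / onorm (upd z i t)))
    (g2 * (z i / onorm z) ^ 2 + g1 (onorm z) * (1 / onorm z - z i ^ 2 / onorm z ^ 3)).
Proof.
  intros Hi Hz Hg Hg1.
  set (N := onorm2 z) in *. set (q := z i).
  pose proof (fun t => onorm_upd z i t Hi) as Hr. fold N q in Hr.
  assert (HR : onorm z = sqrt N) by reflexivity. pose proof (sqrt_lt_R0 N Hz) as HRpos.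
  assert (Hr0 : sqrt (N + 2 * q * 0 + 0 ^ 2) = sqrt N) by (rewrite quad_at_0; reflexivity).
  split.
  - generalize (locally_quad_pos N q Hz). apply filter_imp. intros t Ht.
    rewrite Hr. apply derivable_pt_lim_ext_loc with (fun s => g (sqrt (N + 2 * q * s + s ^ 2))).
    { apply filter_forall. intros s. rewrite Hr. reflexivity. }
    exact (derivable_pt_lim_comp _ g t _ _ (sqrt_quad_derivable N q t Ht) (Hg _ (sqrt_lt_R0 _ Ht))).
  - apply derivable_pt_lim_ext_loc with
      (fun t => g1 (sqrt (N + 2 * q * t + t ^ 2)) * ((q + t) / sqrt (N + 2 * q * t + t ^ 2))).
    { apply filter_forall. intros s. rewrite Hr. reflexivity. }
    assert (Hs := sqrt_quad_derivable N q 0 ltac:(lra)). rewrite Hr0, Rplus_0_r in Hs.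
    rewrite HR, <- Hr0 in Hg1.
    pose proof (derivable_pt_lim_mult _ _ _ _ _ (derivable_pt_lim_comp _ g1 0 _ _ Hs Hg1)
                  (sqrt_quad_deriv2 N q Hz)) as H.
    unfold mult_fct, comp in H. rewrite Hr0, Rplus_0_r in H. rewrite HR.
    match type of H with derivable_pt_lim _ _ ?v => replace (_ + _) with v by (field; lra) end.
    exact H.
Qed.

Definition cos_line (z : Oct) (i : nat) (t : R) : R :=
  (z 0%nat + kron i 0 * t) / sqrt (onorm2 z + 2 * z i * t + t ^ 2).

Definition cos_line' (z : Oct) (i : nat) (t : R) : R :=
  kron i 0 / sqrt (onorm2 z + 2 * z i * t + t ^ 2)
  - (z 0%nat + kron i 0 * t) * (z i + t) / sqrt (onorm2 z + 2 * z i * t + t ^ 2) ^ 3.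

Lemma cos_line_0 z i : cos_line z i 0 = z 0%nat / onorm z.
Proof. unfold cos_line. rewrite quad_at_0, Rmult_0_r, Rplus_0_r. reflexivity. Qed.

Lemma cos_line'_0 z i :
  cos_line' z i 0 = kron i 0 / onorm z - z 0%nat * z i / onorm z ^ 3.
Proof. unfold cos_line'. rewrite quad_at_0, Rmult_0_r, !Rplus_0_r. reflexivity. Qed.

Lemma cos_line_derivable z i t : 0 < onorm2 z + 2 * z i * t + t ^ 2 ->
  derivable_pt_lim (cos_line z i) t (cos_line' z i t).
Proof. apply cos_quad_derivable. Qed.

Lemma cos_line_upd z i t : (i < 8)%nat ->
  upd z i t 0%nat / onorm (upd z i t) = cos_line z i t.
Proof. intros Hi. rewrite upd_coord0, onorm_upd by exact Hi. reflexivity. Qed.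

Lemma locally_cos_upd z i : (i < 8)%nat -> 0 < onorm2 z -> -1 < z 0%nat / onorm z < 1 ->
  locally 0 (fun t => -1 < upd z i t 0%nat / onorm (upd z i t) < 1).
Proof.
  intros Hi Hz Hc.
  assert (Hc0 : -1 < cos_line z i 0 < 1) by (rewrite cos_line_0; exact Hc).
  assert (HC0 := cos_line_derivable z i 0 ltac:(rewrite quad_at_0; exact Hz)).
  generalize (locally_between _ _ _ _ _ HC0 Hc0). apply filter_imp.
  intros t Ht. rewrite cos_line_upd by exact Hi. exact Ht.
Qed.

Lemma polar_line z i : (i < 8)%nat -> 0 < onorm2 z -> -1 < z 0%nat / onorm z < 1 ->
  line_C2 (fun v => acos (v 0%nat / onorm v)) z i
    (fun t => - cos_line' z i t / sqrt (1 - cos_line z i t ^ 2))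
    (- (- 2 * kron i 0 * z i / onorm z ^ 3 - z 0%nat / onorm z ^ 3
        + 3 * z 0%nat * z i ^ 2 / onorm z ^ 5) / sqrt (1 - (z 0%nat / onorm z) ^ 2)
     - z 0%nat / onorm z * (kron i 0 / onorm z - z 0%nat * z i / onorm z ^ 3) ^ 2
       / sqrt (1 - (z 0%nat / onorm z) ^ 2) ^ 3).
Proof.
  intros Hi Hz Hc.
  assert (HC0 := cos_line_derivable z i 0 ltac:(rewrite quad_at_0; exact Hz)).
  assert (Hc0 : -1 < cos_line z i 0 < 1) by (rewrite cos_line_0; exact Hc).
  split.
  - generalize (filter_and _ _ (locally_quad_pos _ (z i) Hz) (locally_cos_upd z i Hi Hz Hc)).
    apply filter_imp. intros t [HQ Ht].
    apply derivable_pt_lim_ext_loc with (fun s => acos (cos_line z i s)).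
    { apply filter_forall. intros s. rewrite cos_line_upd by exact Hi. reflexivity. }
    rewrite cos_line_upd in Ht by exact Hi.
    apply acos_comp_derivable; [exact Ht | apply cos_line_derivable, HQ].
  - pose proof (acos_comp_deriv2 (cos_line z i) (cos_line' z i) _ Hc0 HC0
                  (cos_quad_deriv2 _ _ _ _ Hz)) as H.
    rewrite cos_line_0, cos_line'_0 in H. exact H.
Qed.

Lemma rsum_quadratic z al be ga ep :
  rsum 8 (fun i => al + be * z i ^ 2 + ga * (kron i 0 * z i) + ep * kron i 0 ^ 2)
  = 8 * al + be * onorm2 z + ga * z 0%nat + ep.
Proof. cbv [onorm2 rsum kron Nat.eqb]. ring. Qed.

Section PolarSums.

Variable z : Oct.
Hypothesis z_pos : 0 < onorm2 z.
Hypothesis z_cos : -1 < z 0%nat / onorm z < 1.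

Let R := onorm z.
Let p := z 0%nat.
Let W := sqrt (1 - (p / R) ^ 2).
Let R_pos : 0 < R := onorm_pos z z_pos.

Lemma polar_cos_sq_lt1 : 0 < 1 - (p / R) ^ 2.
Proof. pose proof z_cos as Hc. unfold p, R. set (c := z 0%nat / onorm z) in *. nra. Qed.

Lemma polar_sq_diff_pos : 0 < R ^ 2 - p ^ 2.
Proof.
  pose proof R_pos. pose proof polar_cos_sq_lt1.
  replace (R ^ 2 - p ^ 2) with (R ^ 2 * (1 - (p / R) ^ 2)) by (field; lra).
  apply Rmult_lt_0_compat; [apply pow_lt|]; lra.
Qed.

Lemma polar_sin_pos : 0 < W.
Proof. apply sqrt_lt_R0, polar_cos_sq_lt1. Qed.

Lemma polar_sin_sq : W ^ 2 = 1 - (p / R) ^ 2.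
Proof. apply pow2_sqrt, Rlt_le, polar_cos_sq_lt1. Qed.

Lemma rsum_radial_grad c : rsum 8 (fun i => (c * (z i / R)) ^ 2) = c ^ 2.
Proof.
  pose proof R_pos.
  rewrite (rsum_ext 8 _ (fun i => 0 + c ^ 2 / R ^ 2 * z i ^ 2
                                  + 0 * (kron i 0 * z i) + 0 * kron i 0 ^ 2))
    by (intros; field; lra).
  rewrite rsum_quadratic, <- onorm_sq. fold R. field. lra.
Qed.

Lemma rsum_radial_lap g1 g2 :
  rsum 8 (fun i => g2 * (z i / R) ^ 2 + g1 * (1 / R - z i ^ 2 / R ^ 3)) = g2 + 7 * g1 / R.
Proof.
  pose proof R_pos.
  rewrite (rsum_ext 8 _ (fun i => g1 / R + (g2 / R ^ 2 - g1 / R ^ 3) * z i ^ 2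
                                  + 0 * (kron i 0 * z i) + 0 * kron i 0 ^ 2))
    by (intros; field; lra).
  rewrite rsum_quadratic, <- onorm_sq. fold R. field. lra.
Qed.

Lemma rsum_polar_grad :
  rsum 8 (fun i => (- (kron i 0 / R - p * z i / R ^ 3) / W) ^ 2) = 1 / R ^ 2.
Proof.
  pose proof R_pos. pose proof polar_sin_pos.
  rewrite (rsum_ext 8 _ (fun i => 0 + p ^ 2 / (R ^ 6 * W ^ 2) * z i ^ 2
                                  + - 2 * p / (R ^ 4 * W ^ 2) * (kron i 0 * z i)
                                  + 1 / (R ^ 2 * W ^ 2) * kron i 0 ^ 2))
    by (intros; field; lra).
  rewrite rsum_quadratic, <- onorm_sq, polar_sin_sq. fold R p.
  pose proof polar_sq_diff_pos. field. lra.
Qed.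

Lemma rsum_polar_lap :
  rsum 8 (fun i => - (- 2 * kron i 0 * z i / R ^ 3 - p / R ^ 3 + 3 * p * z i ^ 2 / R ^ 5) / W
                   - p / R * (kron i 0 / R - p * z i / R ^ 3) ^ 2 / W ^ 3)
  = 6 * p / (R ^ 3 * W).
Proof.
  pose proof R_pos. pose proof polar_sin_pos.
  rewrite (rsum_ext 8 _ (fun i => p / (R ^ 3 * W)
                                  + (- 3 * p / (R ^ 5 * W) - p ^ 3 / (R ^ 7 * W ^ 3)) * z i ^ 2
                                  + (2 / (R ^ 3 * W) + 2 * p ^ 2 / (R ^ 5 * W ^ 3))
                                    * (kron i 0 * z i)
                                  + - p / (R ^ 3 * W ^ 3) * kron i 0 ^ 2))
    by (intros; field; lra).
  rewrite rsum_quadratic, <- onorm_sq. fold R p.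
  replace (W ^ 3) with (W * (1 - (p / R) ^ 2)) by (rewrite <- polar_sin_sq; ring).
  pose proof polar_sq_diff_pos. field. lra.
Qed.

Lemma rsum_radial_polar_cross c :
  rsum 8 (fun i => c * (z i / R) * (- (kron i 0 / R - p * z i / R ^ 3) / W)) = 0.
Proof.
  pose proof R_pos. pose proof polar_sin_pos.
  rewrite (rsum_ext 8 _ (fun i => 0 + c * p / (R ^ 4 * W) * z i ^ 2
                                  + - c / (R ^ 2 * W) * (kron i 0 * z i) + 0 * kron i 0 ^ 2))
    by (intros; field; lra).
  rewrite rsum_quadratic, <- onorm_sq. fold R p. field. lra.
Qed.

End PolarSums.

Section Laplacian.

Variables (U : R -> R -> Prop) (f : R -> R -> R).
Hypothesis U_open : forall a b, U a b -> locally_2d U a b.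
Hypothesis f_smooth : smooth_on U f.

Lemma lapR8_comp H z a b a1 b1 a2 b2 Saa Sab Sbb La Lb :
  (forall i, (i < 8)%nat ->
     locally 0 (fun t => H (upd z i t) = f (a (upd z i t)) (b (upd z i t)))) ->
  (forall i, (i < 8)%nat -> line_C2 a z i (a1 i) (a2 i) /\ line_C2 b z i (b1 i) (b2 i)) ->
  U (a z) (b z) ->
  rsum 8 (fun i => a1 i 0 ^ 2) = Saa -> rsum 8 (fun i => a1 i 0 * b1 i 0) = Sab ->
  rsum 8 (fun i => b1 i 0 ^ 2) = Sbb -> rsum 8 a2 = La -> rsum 8 b2 = Lb ->
  lapR8 H z =
    p1 (p1 f) (a z) (b z) * Saa + (p2 (p1 f) (a z) (b z) + p1 (p2 f) (a z) (b z)) * Sab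
    + p2 (p2 f) (a z) (b z) * Sbb + p1 f (a z) (b z) * La + p2 f (a z) (b z) * Lb.
Proof.
  intros HH Hab HU <- <- <- <- <-. unfold lapR8.
  rewrite (rsum_ext 8 _ (fun i => comp_deriv2 f (a z) (b z) (a1 i 0) (b1 i 0) (a2 i) (b2 i))).
  - unfold comp_deriv2. cbv [rsum]. ring.
  - intros i Hi. destruct (Hab i Hi) as [[Ha1 Ha2] [Hb1 Hb2]].
    rewrite (d2_comp U f U_open f_smooth H z i (fun t => a (upd z i t)) (fun t => b (upd z i t))
               (a1 i) (b1 i) (a2 i) (b2 i) (HH i Hi) (filter_and _ _ Ha1 Hb1) Ha2 Hb2);
      rewrite upd_0; [reflexivity | exact HU].
Qed.

Lemma lapR8_radial H z g g1 g2 e : 0 < onorm2 z ->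
  (forall r, 0 < r -> derivable_pt_lim g r (g1 r)) -> derivable_pt_lim g1 (onorm z) g2 ->
  U (g (onorm z)) e ->
  (forall i, (i < 8)%nat -> locally 0 (fun t => H (upd z i t) = f (g (onorm (upd z i t))) e)) ->
  lapR8 H z = p1 (p1 f) (g (onorm z)) e * g1 (onorm z) ^ 2
              + p1 f (g (onorm z)) e * (g2 + 7 * g1 (onorm z) / onorm z).
Proof.
  intros Hz Hg Hg1 HU HH.
  rewrite (lapR8_comp H z (fun v => g (onorm v)) (fun _ => e)
             (fun i t => g1 (onorm (upd z i t)) * ((z i + t) / onorm (upd z i t))) (fun _ _ => 0)
             (fun i => g2 * (z i / onorm z) ^ 2
                       + g1 (onorm z) * (1 / onorm z - z i ^ 2 / onorm z ^ 3))
             (fun _ => 0) (g1 (onorm z) ^ 2) 0 0 (g2 + 7 * g1 (onorm z) / onorm z) 0 HH).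
  - ring.
  - intros i Hi. split; [apply radial_line; assumption | apply const_line].
  - exact HU.
  - transitivity (rsum 8 (fun i => (g1 (onorm z) * (z i / onorm z)) ^ 2)).
    + apply rsum_ext; intros i _. rewrite upd_0, Rplus_0_r. reflexivity.
    + apply rsum_radial_grad, Hz.
  - apply rsum_zero; intros; ring.
  - apply rsum_zero; intros; ring.
  - apply rsum_radial_lap, Hz.
  - apply rsum_zero; reflexivity.
Qed.

Lemma lapR8_radial_polar H z g g1 g2 : 0 < onorm2 z -> -1 < z 0%nat / onorm z < 1 ->
  (forall r, 0 < r -> derivable_pt_lim g r (g1 r)) -> derivable_pt_lim g1 (onorm z) g2 ->
  U (g (onorm z)) (acos (z 0%nat / onorm z)) ->
  (forall i, (i < 8)%nat -> locally 0 (fun t =>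
     H (upd z i t) = f (g (onorm (upd z i t))) (acos (upd z i t 0%nat / onorm (upd z i t))))) ->
  let a := g (onorm z) in let b := acos (z 0%nat / onorm z) in
  lapR8 H z = p1 (p1 f) a b * g1 (onorm z) ^ 2 + p1 f a b * (g2 + 7 * g1 (onorm z) / onorm z)
              + (p2 (p2 f) a b + 6 * (cos b / sin b) * p2 f a b) / onorm z ^ 2.
Proof.
  intros Hz Hc Hg Hg1 HU HH a b.
  assert (Hcos : cos b = z 0%nat / onorm z) by (apply cos_acos; split; lra).
  assert (Hsin : sin b = sqrt (1 - (z 0%nat / onorm z) ^ 2))
    by (unfold b; rewrite sin_acos, Rsqr_pow2 by (split; lra); reflexivity).
  pose proof (onorm_pos z Hz). pose proof (polar_sin_pos z Hc).
  set (R := onorm z) in *. set (p := z 0%nat) in *. set (W := sqrt (1 - (p / R) ^ 2)) in *.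
  rewrite (lapR8_comp H z (fun v => g (onorm v)) (fun v => acos (v 0%nat / onorm v))
             (fun i t => g1 (onorm (upd z i t)) * ((z i + t) / onorm (upd z i t)))
             (fun i t => - cos_line' z i t / sqrt (1 - cos_line z i t ^ 2))
             (fun i => g2 * (z i / R) ^ 2 + g1 R * (1 / R - z i ^ 2 / R ^ 3))
             (fun i => - (- 2 * kron i 0 * z i / R ^ 3 - p / R ^ 3 + 3 * p * z i ^ 2 / R ^ 5) / W
                       - p / R * (kron i 0 / R - p * z i / R ^ 3) ^ 2 / W ^ 3)
             (g1 R ^ 2) 0 (1 / R ^ 2) (g2 + 7 * g1 R / R) (6 * p / (R ^ 3 * W)) HH).
  - change (g (onorm z)) with a. change (acos (z 0%nat / onorm z)) with b.
    rewrite Hcos, Hsin. field. lra.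
  - intros i Hi. split; [apply radial_line; assumption | apply polar_line; assumption].
  - exact HU.
  - transitivity (rsum 8 (fun i => (g1 R * (z i / R)) ^ 2)).
    + apply rsum_ext; intros i _. rewrite upd_0, Rplus_0_r. reflexivity.
    + apply rsum_radial_grad, Hz.
  - transitivity (rsum 8 (fun i => g1 R * (z i / R) * (- (kron i 0 / R - p * z i / R ^ 3) / W))).
    + apply rsum_ext; intros i _. rewrite upd_0, Rplus_0_r, cos_line_0, cos_line'_0. reflexivity.
    + apply rsum_radial_polar_cross; assumption.
  - transitivity (rsum 8 (fun i => (- (kron i 0 / R - p * z i / R ^ 3) / W) ^ 2)).
    + apply rsum_ext; intros i _. rewrite cos_line_0, cos_line'_0. reflexivity.
    + apply rsum_polar_grad; assumption.
  - apply rsum_radial_lap, Hz.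
  - apply rsum_polar_lap; assumption.
Qed.

End Laplacian.

(** * The radial part *)

Lemma rectangle_open a b : 0 < a < 1 /\ 0 < b < PI ->
  locally_2d (fun a b => 0 < a < 1 /\ 0 < b < PI) a b.
Proof.
  intros H.
  assert (Hd : 0 < Rmin (Rmin a (1 - a)) (Rmin b (PI - b))) by (repeat apply Rmin_pos; lra).
  exists (mkposreal _ Hd). simpl. intros u v Hu Hv.
  apply Rabs_def2 in Hu. apply Rabs_def2 in Hv.
  pose proof (Rmin_l (Rmin a (1 - a)) (Rmin b (PI - b))).
  pose proof (Rmin_r (Rmin a (1 - a)) (Rmin b (PI - b))).
  pose proof (Rmin_l a (1 - a)). pose proof (Rmin_r a (1 - a)).
  pose proof (Rmin_l b (PI - b)). pose proof (Rmin_r b (PI - b)).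
  split; lra.
Qed.

Lemma cosh_pos x : 0 < cosh x.
Proof. unfold cosh. pose proof (exp_pos x). pose proof (exp_pos (- x)). lra. Qed.

Lemma cosh_sq_sub_sinh_sq x : cosh x ^ 2 - sinh x ^ 2 = 1.
Proof. unfold cosh, sinh. rewrite exp_Ropp. pose proof (exp_pos x). field. lra. Qed.

Lemma sinh_pos r : 0 < r -> 0 < sinh r.
Proof. intros Hr. rewrite <- sinh_0. apply sinh_lt, Hr. Qed.

Lemma one_sub_tanh_sq r : 1 - tanh r ^ 2 = / cosh r ^ 2.
Proof.
  pose proof (cosh_pos r). pose proof (cosh_sq_sub_sinh_sq r) as Hcs.
  unfold tanh. transitivity ((cosh r ^ 2 - sinh r ^ 2) / cosh r ^ 2); [|rewrite Hcs]; field; lra.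
Qed.

Lemma tanh_bounds r : 0 < r -> 0 < tanh r < 1.
Proof.
  intros Hr. pose proof (cosh_pos r). pose proof (cosh_sq_sub_sinh_sq r).
  pose proof (sinh_pos r Hr).
  unfold tanh. split; [apply Rdiv_lt_0_compat; lra|].
  apply (Rmult_lt_reg_r (cosh r)); [lra|]. field_simplify; nra.
Qed.

Lemma tanh_derivable t : derivable_pt_lim tanh t (/ cosh t ^ 2).
Proof.
  pose proof (cosh_pos t) as Hc. pose proof (cosh_sq_sub_sinh_sq t) as Hcs.
  pose proof (derivable_pt_lim_div _ _ t _ _ (derivable_pt_lim_sinh t) (derivable_pt_lim_cosh t)
                (Rgt_not_eq _ _ Hc)) as H.
  replace (/ cosh t ^ 2) with ((cosh t * cosh t - sinh t * sinh t) / (cosh t)²); [exact H|].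
  unfold Rsqr. replace (cosh t * cosh t - sinh t * sinh t) with 1 by (rewrite <- Hcs; ring).
  field. lra.
Qed.

Lemma sech2_derivable t :
  derivable_pt_lim (fun s => / cosh s ^ 2) t (- 2 * sinh t / cosh t ^ 3).
Proof.
  pose proof (cosh_pos t) as Hc.
  assert (Hinv : derivable_pt_lim (fun u => / u ^ 2) (cosh t) (- 2 / cosh t ^ 3)).
  { assert (0 < cosh t ^ 2) by (apply pow_lt; lra).
    apply is_derive_Reals. auto_derive; [lra | field; lra]. }
  replace (- 2 * sinh t / cosh t ^ 3) with (- 2 / cosh t ^ 3 * sinh t) by (field; lra).
  exact (derivable_pt_lim_comp _ _ t _ _ (derivable_pt_lim_cosh t) Hinv).
Qed.

Lemma cos_open_bounds eta : 0 < eta < PI -> -1 < cos eta < 1.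
Proof.
  intros Heta. pose proof (sin_gt_0 eta (proj1 Heta) (proj2 Heta)). pose proof (sin2_cos2 eta).
  unfold Rsqr in *. nra.
Qed.

Section RadialPart.

Variables (Y : nat -> Oct) (f : R -> R -> R) (F : Oct -> Oct -> R).
Hypothesis Y_frame : orthonormal_frame_at_e0 Y.
Hypothesis f_smooth : smooth_on (fun rho eta => 0 < rho < 1 /\ 0 < eta < PI) f.
Hypothesis F_psi : forall w th, onorm w < 1 -> thnorm th < PI ->
  F (psi_x Y w th) (psi_y Y w th) = f (onorm w) (thnorm th).

Section AtPoint.

Variables x y : Oct.
Hypothesis xy_AdS : AdS x y.
Hypothesis x_pos : 0 < onorm2 x.
Hypothesis y_cos : -1 < y 0%nat / onorm y < 1.

Let rho := onorm x / onorm y.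
Let eta := acos (y 0%nat / onorm y).
Let u := oscale (/ onorm y) y.

Lemma y_pos : 0 < onorm2 y.
Proof. unfold AdS in xy_AdS. lra. Qed.

Lemma x_norm_pos : 0 < onorm x.
Proof. apply onorm_pos, x_pos. Qed.

Lemma y_norm_pos : 0 < onorm y.
Proof. apply onorm_pos, y_pos. Qed.

Lemma cylindrical_in_rectangle : 0 < rho < 1 /\ 0 < eta < PI.
Proof.
  pose proof xy_AdS as Hxy. unfold AdS in Hxy.
  pose proof x_norm_pos. pose proof y_norm_pos. pose proof (onorm_lt x y ltac:(lra)).
  split; [| apply acos_bound_lt, y_cos].
  unfold rho. split; [apply Rdiv_lt_0_compat; lra|].
  apply (Rmult_lt_reg_r (onorm y)); [lra|]. field_simplify; lra.
Qed.

Lemma sin_eta_pos : 0 < sin eta.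
Proof. apply sin_gt_0; apply cylindrical_in_rectangle. Qed.

Lemma u_unit : onorm u = 1.
Proof. unfold u, onorm at 1. rewrite unit_oscale by exact y_pos. apply sqrt_1. Qed.

Lemma u_cos : u 0%nat / onorm u = y 0%nat / onorm y.
Proof.
  pose proof y_norm_pos. rewrite u_unit. unfold u. rewrite oscale_0. field. lra.
Qed.

Lemma lap_homog_x :
  lapR8 (fun x' => homog F x' y) x = (p1 (p1 f) rho eta + 7 * p1 f rho eta / rho) / onorm y ^ 2.
Proof.
  pose proof xy_AdS as Hxy. unfold AdS in Hxy. pose proof x_norm_pos. pose proof y_norm_pos.
  rewrite (lapR8_radial _ f rectangle_open f_smooth _ x
             (fun r => r / onorm y) (fun _ => / onorm y) 0 eta x_pos).
  - cbv beta. fold rho. unfold rho. field. lra.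
  - intros r _. apply is_derive_Reals. auto_derive; [lra | field; lra].
  - apply derivable_pt_lim_const.
  - exact cylindrical_in_rectangle.
  - intros i Hi. generalize (locally_onorm2_upd x i (-1) (onorm2 y) Hi ltac:(lra)).
    apply filter_imp. intros t Ht. apply (homog_eq Y f F Y_frame F_psi); [lra | exact y_cos].
Qed.

Lemma lap_homog_y :
  lapR8 (fun y' => homog F x y') y =
  (p1 (p1 f) rho eta * rho ^ 2 - 5 * p1 f rho eta * rho
   + (p2 (p2 f) rho eta + 6 * (cos eta / sin eta) * p2 f rho eta)) / onorm y ^ 2.
Proof.
  pose proof xy_AdS as Hxy. unfold AdS in Hxy. pose proof x_norm_pos. pose proof y_norm_pos.
  assert (0 < onorm y ^ 2) by (apply pow_lt; lra).
  rewrite (lapR8_radial_polar _ f rectangle_open f_smooth _ y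
             (fun r => onorm x / r) (fun r => - onorm x / r ^ 2) (2 * onorm x / onorm y ^ 3)
             y_pos y_cos).
  - cbv beta. fold rho eta. unfold rho. pose proof sin_eta_pos. field. lra.
  - intros r Hr. apply is_derive_Reals. auto_derive; [lra | field; lra].
  - apply is_derive_Reals. auto_derive; [lra | field; lra].
  - exact cylindrical_in_rectangle.
  - intros i Hi.
    assert (Hn : onorm2 x < onorm2 y < onorm2 y + 1) by lra.
    generalize (filter_and _ _ (locally_onorm2_upd y i _ _ Hi Hn)
                  (locally_cos_upd y i Hi y_pos y_cos)).
    apply filter_imp. intros t [Ht Hct]. apply (homog_eq Y f F Y_frame F_psi); [lra | exact Hct].
Qed.

Lemma vertlap_eq :
  vertlap F x y = p2 (p2 f) rho eta + 6 * (cos eta / sin eta) * p2 f rho eta.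
Proof.
  pose proof u_unit as Hu. pose proof u_cos as Hu0.
  assert (Hu2 : 0 < onorm2 u < 2) by (rewrite <- onorm_sq, Hu; lra).
  assert (Hcu : -1 < u 0%nat / onorm u < 1) by (rewrite Hu0; exact y_cos).
  unfold vertlap, lapS7. cbv zeta. fold u.
  rewrite (lapR8_radial_polar _ f rectangle_open f_smooth _ u
             (fun _ => rho) (fun _ => 0) 0 ltac:(lra) Hcu).
  - rewrite Hu0, Hu. fold eta. pose proof sin_eta_pos. field. lra.
  - intros r _. apply derivable_pt_lim_const.
  - apply derivable_pt_lim_const.
  - rewrite Hu0. exact cylindrical_in_rectangle.
  - intros i Hi. assert (Hp : 0 < onorm2 u) by lra.
    generalize (filter_and _ _ (locally_onorm2_upd u i _ _ Hi Hu2) (locally_cos_upd u i Hi Hp Hcu)).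
    apply filter_imp. intros t [Ht Hct].
    apply (vertical_eq Y f F Y_frame F_psi); [exact xy_AdS | lra | exact Hct].
Qed.

Lemma subL_on_AdS :
  subL F x y =
    (1 - rho ^ 2) ^ 2 * p1 (p1 f) rho eta + (1 - rho ^ 2) * (7 / rho + 5 * rho) * p1 f rho eta
    + rho ^ 2 * (p2 (p2 f) rho eta + 6 * (cos eta / sin eta) * p2 f rho eta).
Proof.
  pose proof xy_AdS as Hxy. unfold AdS in Hxy. pose proof x_norm_pos. pose proof y_norm_pos.
  assert (Hs : / onorm y ^ 2 = 1 - rho ^ 2).
  { assert (HXY : onorm y ^ 2 - onorm x ^ 2 = 1) by (rewrite !onorm_sq; lra).
    unfold rho. transitivity ((onorm y ^ 2 - onorm x ^ 2) / onorm y ^ 2); [rewrite HXY|];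
      field; lra. }
  unfold subL, dalembert. rewrite lap_homog_x, lap_homog_y, vertlap_eq.
  unfold Rdiv. rewrite Hs.
  pose proof (proj1 (proj1 cylindrical_in_rectangle)). pose proof sin_eta_pos. field. lra.
Qed.

End AtPoint.

Lemma deriv_tanh_comp r eta : 0 < r -> 0 < eta < PI ->
  deriv (fun t => f (tanh t) eta) r = p1 f (tanh r) eta / cosh r ^ 2.
Proof.
  intros Hr Heta. apply deriv_eq.
  pose proof (smooth_chain _ f rectangle_open f_smooth nil tanh (fun _ => eta) r _ _
                ltac:(split; [apply tanh_bounds, Hr | exact Heta])
                (tanh_derivable r) (derivable_pt_lim_const eta r)) as H.
  replace (p1 f (tanh r) eta / cosh r ^ 2)
    with (p1 f (tanh r) eta * / cosh r ^ 2 + p2 f (tanh r) eta * 0) by (unfold Rdiv; ring).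
  exact H.
Qed.

Lemma deriv2_tanh_comp r eta : 0 < r -> 0 < eta < PI ->
  deriv (fun s => deriv (fun t => f (tanh t) eta) s) r =
  p1 (p1 f) (tanh r) eta / cosh r ^ 4 - 2 * tanh r * p1 f (tanh r) eta / cosh r ^ 2.
Proof.
  intros Hr Heta. pose proof (cosh_pos r).
  rewrite (deriv2_comp _ f rectangle_open f_smooth tanh (fun _ => eta)
             (fun t => / cosh t ^ 2) (fun _ => 0) r (- 2 * sinh r / cosh r ^ 3) 0).
  - unfold comp_deriv2, tanh. field. lra.
  - apply filter_forall. intros t. split; [apply tanh_derivable | apply derivable_pt_lim_const].
  - apply sech2_derivable.
  - apply derivable_pt_lim_const.
  - split; [apply tanh_bounds, Hr | exact Heta].
Qed.

End RadialPart.

Theorem proposition1 :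
  forall (Y : nat -> Oct) (f : R -> R -> R) (F : Oct -> Oct -> R),
    orthonormal_frame_at_e0 Y ->
    (* f is smooth on (the interior of) [0,1) x [0,pi) *)
    smooth_on (fun rho eta => 0 < rho < 1 /\ 0 < eta < PI) f ->
    (* f is compactly supported in [0,1) x [0,pi) *)
    (exists d, 0 < d /\ forall rho eta, 0 <= rho < 1 -> 0 <= eta < PI ->
        (1 - d < rho \/ PI - d < eta) -> f rho eta = 0) ->
    (* F is the function f o psi^{-1} on the image of psi in AdS^15(O) *)
    (forall (w : Oct) (th : nat -> R), onorm w < 1 -> thnorm th < PI ->
        F (psi_x Y w th) (psi_y Y w th) = f (onorm w) (thnorm th)) ->
    forall (r eta : R) (w : Oct) (th : nat -> R),
      0 < r -> 0 < eta < PI ->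
      onorm w = tanh r -> thnorm th = eta ->
      let g := fun r' eta' => f (tanh r') eta' in
      subL F (psi_x Y w th) (psi_y Y w th) =
        deriv (fun s => deriv (fun t => g t eta) s) r
        + (7 * (cosh r / sinh r) + 7 * tanh r) * deriv (fun t => g t eta) r
        + (tanh r) ^ 2 *
          ( deriv (fun s => deriv (fun t => g r t) s) eta
            + 6 * (cos eta / sin eta) * deriv (fun t => g r t) eta ).
Proof.
  intros Y f F HY Hsmooth _ HF r eta w th Hr Heta Hw Hth g. unfold g.
  pose proof (tanh_bounds r Hr). pose proof (sinh_pos r Hr). pose proof (cosh_pos r).
  pose proof (sin_gt_0 eta (proj1 Heta) (proj2 Heta)).
  assert (Hw1 : onorm w < 1) by lra. assert (Hth0 : 0 < thnorm th) by lra.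
  destruct (psi_AdS Y HY w th Hw1 Hth0) as (Hads & Hratio & Hcos).
  rewrite Hw, Hth in *.
  rewrite (subL_on_AdS Y f F HY Hsmooth HF _ _ Hads); cycle 1.
  { apply (onorm2_pos_of_ratio _ (psi_y Y w th)). lra. }
  { rewrite Hcos. apply cos_open_bounds, Heta. }
  rewrite Hratio, Hcos, acos_cos, (deriv2_tanh_comp f Hsmooth), (deriv_tanh_comp f Hsmooth)
    by (try split; lra).
  change (deriv (fun s => deriv (fun t => f (tanh r) t) s) eta) with (p2 (p2 f) (tanh r) eta).
  change (deriv (fun t => f (tanh r) t) eta) with (p2 f (tanh r) eta).
  rewrite one_sub_tanh_sq. unfold tanh. field. repeat split; lra.
Qed.
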